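(* Let $J=p\ge1$, $\sigma_\varepsilon^2>0$, $I>0$, let $\mathbf{\Sigma}_\gamma$ be a nonnegative definite symmetric $J\times J$ matrix and $\mathbf{A}_{\bm\beta}$ a nonsingular $J\times J$ matrix. For an approximate design $\xi=(I_1,\dots,I_J)$ (reals $I_j\ge0$, $\sum_jI_j=I$) put $\mathbf{M}_0(\xi)=\mathrm{diag}(I_1,\dots,I_J)$ and $\mathbf{M}_{\bm\beta}(\xi)=\mathbf{A}_{\bm\beta}^{\mathrm T}\mathbf{M}_0(\xi)^{1/2}\big(\sigma_\varepsilon^2\mathbf{I}_J+\mathbf{M}_0(\xi)^{1/2}\mathbf{\Sigma}_\gamma\mathbf{M}_0(\xi)^{1/2}\big)^{-1}\mathbf{M}_0(\xi)^{1/2}\mathbf{A}_{\bm\beta}$ with $\mathbf{M}_0(\xi)^{1/2}=\mathrm{diag}(\sqrt{I_1},\dots,\sqrt{I_J})$. Let $\xi^*=(I_1^*,\dots,I_J^* )$ be a design with all $I_j^*>0$, and let $\psi_j$ denote the $j$th diagonal entry of $$\mathbf{M}_0(\xi^* )^{-1}\big(\sigma_\varepsilon^2\mathbf{M}_0(\xi^* )^{-1}+\mathbf{\Sigma}_\gamma\big)^{-1}\mathbf{M}_0(\xi^* )^{-1}.$$ Then $\xi^*$ is $D$-optimal if and only if $$I\psi_j=\mathrm{trace}\Big(\big(\sigma_\varepsilon^2\mathbf{M}_0(\xi^* )^{-1}+\mathbf{\Sigma}_\gamma\big)^{-1}\mathbf{M}_0(\xi^* )^{-1}\Big)\quad\text{for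 all } j=1,\dots,J.$$
   Context: $\mathbf{A}_{\bm\beta}$ is the Jacobian of the mean response curve at a fixed parameter $\bm\beta$, with as many parameters as time points. $\bm\beta$ is estimable under $\xi$ if $\mathbf{A}_{\bm\beta}$ has full column rank and its columns lie in the column space of $\mathbf{M}_0(\xi)$ (for $J=p$ this forces all $I_j>0$). A design $\xi^*$ is $D$-optimal if $\log\det\mathbf{M}_{\bm\beta}(\xi^* )\ge\log\det\mathbf{M}_{\bm\beta}(\xi)$ for all approximate designs $\xi$ with total $I$ under which $\bm\beta$ is estimable. *)

From HB Require Import structures.
From mathcomp Require Import all_boot all_order all_algebra.
From mathcomp Require Import reals exp.
Set Implicit Arguments. Unset Strict Implicit. Unset Printing Implicit Defensive.
Import Order.TTheory GRing.Theory Num.Theory.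
Local Open Scope ring_scope.

Section Design.
Variables (R : realType) (n : nat).

Definition is_design (I : R) (xi : 'I_n -> R) : Prop :=
  (forall j, 0 <= xi j) /\ \sum_(j < n) xi j = I.

Definition M0 (xi : 'I_n -> R) : 'M[R]_n := diag_mx (\row_j xi j).
Definition M0sqrt (xi : 'I_n -> R) : 'M[R]_n := diag_mx (\row_j Num.sqrt (xi j)).

Definition Mbeta (s2 : R) (Sg A : 'M[R]_n) (xi : 'I_n -> R) : 'M[R]_n :=
  A^T *m M0sqrt xi *m invmx (s2%:M + M0sqrt xi *m Sg *m M0sqrt xi)
      *m M0sqrt xi *m A.

(* beta estimable: A full column rank, columns of A in column space of M0 *)
Definition estimable (A : 'M[R]_n) (xi : 'I_n -> R) : Prop :=
  \rank A = n /\ (A^T <= (M0 xi)^T)%MS.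

Definition D_optimal (I s2 : R) (Sg A : 'M[R]_n) (xis : 'I_n -> R) : Prop :=
  is_design I xis /\ estimable A xis /\
  forall xi, is_design I xi -> estimable A xi ->
    ln (\det (Mbeta s2 Sg A xi)) <= ln (\det (Mbeta s2 Sg A xis)).
End Design.

(* Estimability forces all weights to be positive, and for positive weights
   M_beta(x) = A^T C(x)^-1 A with C(x) = s2 M0(x)^-1 + Sg, so x is D-optimal iff
   it minimises det C among positive designs with the same total.  Since
   tr (C(x)^-1 M0(x)^-1) = sum_j x_j psi_j, the criterion says that psi is
   constant.
   Necessity: moving weight t from point k to point j perturbs two diagonal
   entries of C; det C is bilinear in the perturbations, and stationarity at
   t = 0 gives cof_jj C / x_j^2 = cof_kk C / x_k^2, i.e. psi_j = psi_k.
   Sufficiency: completing squares gives C(y)^-1 <= C(x)^-1 C(x^2/y) C(x)^-1 in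
   the Loewner order.  Writing C(x) = L L^T, the matrix G = L^T C(y)^-1 L has
   det G = det C(x) / det C(y), and when psi is constant the bound yields
   tr G <= J, so det G <= (tr G / J)^J <= 1 by AM-GM on the diagonal of the
   Cholesky factor of G. *)

From HB Require Import structures.
From mathcomp Require Import all_boot all_order all_algebra.
From mathcomp Require Import reals exp.
From mathcomp Require Import ring lra.
Set Implicit Arguments. Unset Strict Implicit. Unset Printing Implicit Defensive.
Import Order.TTheory GRing.Theory Num.Theory.
Local Open Scope ring_scope.

Lemma mxtrace_mul_diag {R : pzSemiRingType} n (B : 'M[R]_n) (d : 'rV_n) :
  \tr (B *m diag_mx d) = \sum_j B j j * d 0 j.
Proof. by rewrite mul_mx_diag; apply: eq_bigr => j _; rewrite mxE. Qed.

Lemma invmx_unique {R : comUnitRingType} n (A B : 'M[R]_n) :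
  A *m B = 1%:M -> invmx A = B.
Proof.
move=> AB1; have [A_unit _] := mulmx1_unit AB1.
by rewrite -[invmx A]mulmx1 -AB1 mulmxA mulVmx // mul1mx.
Qed.

Lemma invmxM {R : comUnitRingType} n (A B : 'M[R]_n) :
  A \in unitmx -> B \in unitmx -> invmx (A *m B) = invmx B *m invmx A.
Proof.
by move=> A_unit B_unit; apply: invmx_unique; rewrite mulmxA mulmxK // mulmxV.
Qed.

Lemma invmx_diag {R : fieldType} n (d : 'rV[R]_n) : (forall j, d 0 j != 0) ->
  invmx (diag_mx d) = diag_mx (\row_j (d 0 j)^-1).
Proof.
move=> d_neq0; apply: invmx_unique; rewrite mulmx_diag -diag_const_mx.
by congr diag_mx; apply/rowP => j; rewrite !mxE mulfV.
Qed.

Section QuadraticForms.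
Variable R : realFieldType.
Implicit Types (n : nat).

Definition psdmx n (M : 'M[R]_n) := forall v : 'rV_n, 0 <= (v *m M *m v^T) 0 0.
Definition pdmx n (M : 'M[R]_n) := forall v : 'rV_n, v != 0 -> 0 < (v *m M *m v^T) 0 0.

Lemma pdmx_psd n (M : 'M[R]_n) : pdmx M -> psdmx M.
Proof.
move=> M_pd v; have [->|v_neq0] := eqVneq v 0; last exact/ltW/M_pd.
by rewrite !mul0mx mxE.
Qed.

Lemma psdmx_diag_ge0 n (M : 'M[R]_n) i : psdmx M -> 0 <= M i i.
Proof.
move=> /(_ (delta_mx 0 i)).
by rewrite -rowE -row_mul mxE trmx_delta -colE mxE.
Qed.

Lemma pdmx_diag_gt0 n (M : 'M[R]_n) i : pdmx M -> 0 < M i i.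
Proof.
move=> /(_ (delta_mx 0 i)); rewrite -rowE -row_mul mxE trmx_delta -colE mxE.
by apply; apply/eqP => /matrixP/(_ 0 i)/eqP; rewrite !mxE !eqxx oner_eq0.
Qed.

Lemma pdmx_unit n (M : 'M[R]_n) : pdmx M -> M \in unitmx.
Proof.
move=> M_pd; rewrite unitmxE unitfE; apply/negP => /det0P[v v_neq0 vM0].
by have := M_pd v v_neq0; rewrite vM0 mul0mx mxE ltxx.
Qed.

Lemma qformC n (M : 'M[R]_n) (u v : 'rV_n) :
  M^T = M -> (u *m M *m v^T) 0 0 = (v *m M *m u^T) 0 0.
Proof.
move=> M_sym; transitivity ((u *m M *m v^T)^T 0 0); first by rewrite [in RHS]mxE.
by rewrite !trmx_mul trmxK M_sym mulmxA.
Qed.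

Lemma qformB n (M : 'M[R]_n) (u w : 'rV_n) : M^T = M ->
  ((u - w) *m M *m (u - w)^T) 0 0 =
  (u *m M *m u^T) 0 0 - 2 * (u *m M *m w^T) 0 0 + (w *m M *m w^T) 0 0.
Proof.
move=> M_sym; have := qformC w u M_sym.
rewrite linearB /= !mulmxBl !mulmxBr.
move: (u *m M *m u^T) (u *m M *m w^T) (w *m M *m u^T) (w *m M *m w^T).
by move=> uu uw wu ww wuE; rewrite !mxE wuE; ring.
Qed.

Lemma pdmx_inv n (M : 'M[R]_n) : M^T = M -> pdmx M -> pdmx (invmx M).
Proof.
move=> M_sym M_pd v v_neq0; have M_unit := pdmx_unit M_pd.
have u_neq0 : v *m invmx M != 0.
  by apply: contraNneq v_neq0 => vM0; rewrite -(mulmxKV M_unit v) vM0 mul0mx.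
have := M_pd _ u_neq0.
by rewrite trmx_mul trmx_inv M_sym mulmxA mulmxKV.
Qed.

Lemma pdmx_congr n (M L : 'M[R]_n) :
  L \in unitmx -> pdmx M -> pdmx (L *m M *m L^T).
Proof.
move=> L_unit M_pd v v_neq0.
have vL_neq0 : v *m L != 0.
  by apply: contraNneq v_neq0 => vL0; rewrite -(mulmxK L_unit v) vL0 mul0mx.
by have := M_pd _ vL_neq0; rewrite trmx_mul !mulmxA.
Qed.

Lemma mxtrace_qform_rows m n (X : 'M[R]_(m, n)) (M : 'M[R]_n) :
  \tr (X *m M *m X^T) = \sum_i (row i X *m M *m (row i X)^T) 0 0.
Proof.
apply: eq_bigr => i _; rewrite -row_mul !mxE.
by apply: eq_bigr => k _; rewrite !mxE.
Qed.

Lemma ler_mxtrace_qform m n (X : 'M[R]_(m, n)) (M N : 'M[R]_n) :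
  (forall v : 'rV_n, (v *m M *m v^T) 0 0 <= (v *m N *m v^T) 0 0) ->
  \tr (X *m M *m X^T) <= \tr (X *m N *m X^T).
Proof. by move=> MN; rewrite !mxtrace_qform_rows; apply: ler_sum => i _. Qed.

End QuadraticForms.

Section Cholesky.
Variable R : rcfType.
Implicit Types (n : nat).

Definition schur_compl n (M : 'M[R]_(1 + n)) : 'M_n :=
  drsubmx M - (ulsubmx M 0 0)^-1 *: ((ursubmx M)^T *m ursubmx M).

Lemma schur_compl_sym n (M : 'M[R]_(1 + n)) :
  M^T = M -> (schur_compl M)^T = schur_compl M.
Proof.
by move=> M_sym; rewrite linearB /= linearZ /= trmx_mul trmxK trmx_drsub M_sym.
Qed.

Lemma pdmx_schur_compl n (M : 'M[R]_(1 + n)) :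
  M^T = M -> pdmx M -> pdmx (schur_compl M).
Proof.
move=> M_sym M_pd v v_neq0.
set a := ulsubmx M 0 0; set b := ursubmx M; set D := drsubmx M.
have a_gt0 : 0 < a by rewrite /a !mxE; apply: pdmx_diag_gt0.
have M_blocks : M = block_mx a%:M b b^T D.
  by rewrite /a -mx11_scalar /b trmx_ursub M_sym submxK.
(* [w] minimises the quadratic form of [M] over its first coordinate. *)
set w := row_mx (- ((b *m v^T) 0 0 / a))%:M v.
have w_neq0 : w != 0 by rewrite row_mx_eq0 negb_and v_neq0 orbT.
suff <- : (w *m M *m w^T) 0 0 = (v *m schur_compl M *m v^T) 0 0.
  exact: M_pd.
have vb : (v *m b^T) 0 0 = (b *m v^T) 0 0.
  by rewrite !mxE; apply: eq_bigr => k _; rewrite !mxE mulrC.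
have vbbv : (v *m (b^T *m b) *m v^T) 0 0 = (b *m v^T) 0 0 ^+ 2.
  by rewrite mulmxA -mulmxA mxE big_ord1 vb.
rewrite /schur_compl -/a -/b -/D M_blocks tr_row_mx mul_row_block mul_row_col.
rewrite tr_scalar_mx !mul_scalar_mx !mul_mx_scalar mulmxDl -scalemxAl.
rewrite mulmxBr mulmxBl -scalemxAr -scalemxAl; move: vb vbbv.
move: (v *m b^T) (b *m v^T) (v *m D *m v^T) (v *m (b^T *m b) *m v^T).
move=> vbT bvT vDvT vbbvT vb vbbv; rewrite !mxE eqxx mulr1n vb vbbv.
by field; rewrite gt_eqF.
Qed.

Lemma cholesky_schur_compl n (M : 'M[R]_(1 + n)) (K : 'M_n) :
  M^T = M -> pdmx M -> is_trig_mx K -> schur_compl M = K *m K^T ->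
  exists2 L : 'M_(1 + n), is_trig_mx L & M = L *m L^T.
Proof.
move=> M_sym M_pd K_trig S_eq; move: S_eq; rewrite /schur_compl.
set a := ulsubmx M 0 0; set b := ursubmx M => S_eq.
have a_gt0 : 0 < a by rewrite /a !mxE; apply: pdmx_diag_gt0.
set s := Num.sqrt a; have s_gt0 : 0 < s by rewrite sqrtr_gt0.
have ss : s * s = a by rewrite -expr2 sqr_sqrtr ?ltW.
exists (block_mx s%:M 0 (s^-1 *: b^T) K).
  by rewrite is_trig_block_mx // eqxx scalar_mx_is_trig K_trig.
rewrite tr_block_mx mulmx_block !trmx0 !mulmx0 !mul0mx !addr0.
rewrite tr_scalar_mx -scalar_mxM ss mul_scalar_mx mul_mx_scalar !linearZ /= trmxK.
rewrite !scalerA mulVf ?gt_eqF // !scale1r -scalemxAl scalerA -invfM ss -S_eq.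
rewrite addrCA subrr addr0 /a /b -mx11_scalar -[in LHS](submxK M).
by rewrite trmx_ursub M_sym.
Qed.

Lemma cholesky n (M : 'M[R]_n) :
  M^T = M -> pdmx M -> exists2 L : 'M_n, is_trig_mx L & M = L *m L^T.
Proof.
elim: n M => [|n IHn] M M_sym M_pd.
  by exists 0; [apply/is_trig_mxP => -[] | apply/matrixP => -[]].
have [K K_trig S_eq] := IHn _ (schur_compl_sym M_sym) (pdmx_schur_compl M_sym M_pd).
exact: cholesky_schur_compl S_eq.
Qed.

Lemma pdmx_det_gt0 n (M : 'M[R]_n) : M^T = M -> pdmx M -> 0 < \det M.
Proof.
move=> M_sym M_pd; have := pdmx_unit M_pd; rewrite unitmxE unitfE => detM_neq0.
have [L _ M_eq] := cholesky M_sym M_pd.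
by rewrite lt_def detM_neq0 M_eq det_mulmx det_tr -expr2 sqr_ge0.
Qed.

Lemma det_le_mxtrace n (M : 'M[R]_n) :
  M^T = M -> pdmx M -> \det M <= (\tr M / n%:R) ^+ n.
Proof.
move=> M_sym M_pd; have [L L_trig M_eq] := cholesky M_sym M_pd.
have diagM i : M i i = \sum_k L i k ^+ 2.
  by rewrite M_eq mxE; apply: eq_bigr => k _; rewrite mxE expr2.
have -> : \det M = \prod_i L i i ^+ 2.
  by rewrite M_eq det_mulmx det_tr det_trig // -expr2 prodrXl.
apply: (@le_trans _ _ (\prod_i M i i)).
  apply: ler_prod => i _; rewrite sqr_ge0 diagM (bigD1 i) //= lerDl.
  by apply: sumr_ge0 => k _; rewrite sqr_ge0.
have diag_ge0 : {in predT, forall i, 0 <= M i i}.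
  by move=> i _; apply/psdmx_diag_ge0/pdmx_psd.
by have [AGM _] := leif_AGM diag_ge0; rewrite card_ord in AGM.
Qed.

Lemma det_le1_of_mxtrace_le n (M : 'M[R]_n) :
  M^T = M -> pdmx M -> \tr M <= n%:R -> \det M <= 1.
Proof.
move=> M_sym M_pd trM_le; apply: le_trans (det_le_mxtrace M_sym M_pd) _.
have trM_ge0 : 0 <= \tr M.
  by apply: sumr_ge0 => i _; apply/psdmx_diag_ge0/pdmx_psd.
apply: exprn_ile1; first by rewrite divr_ge0.
have := ler0n R n; rewrite le_eqVlt => /orP[/eqP <-|n_gt0].
  by rewrite invr0 mulr0.
by rewrite ler_pdivrMr // mul1r.
Qed.
End Cholesky.

Section DiagonalUpdate.
Variables (R : comPzRingType) (n : nat).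
Implicit Types (M : 'M[R]_n) (a b : R).

Lemma det_add_delta M i a :
  \det (M + a *: delta_mx i i) = \det M + a * cofactor M i i.
Proof.
rewrite (expand_det_row _ i) [\det M](expand_det_row _ i).
have cofE j : cofactor (M + a *: delta_mx i i) i j = cofactor M i j.
  rewrite /cofactor; congr (_ * \det _); apply/matrixP => p q; rewrite !mxE.
  by rewrite eq_sym (negbTE (neq_lift _ _)) mulr0 addr0.
under eq_bigr => j _ do rewrite cofE !mxE eqxx /= mulrDl.
rewrite big_split /=; congr (_ + _).
rewrite (bigD1 i) //= eqxx mulr1 big1 ?addr0 // => j /negbTE; rewrite eq_sym => ->.
by rewrite mulr0 mul0r.
Qed.

(* Expanding along [j] and along [k] in turn shows that the [(j, j)] cofactor of
   [M + b *: delta_mx k k] is affine in [b]. *)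
Lemma det_add_delta2 M j k : exists d, forall a b,
  \det (M + a *: delta_mx j j + b *: delta_mx k k) =
  \det M + a * cofactor M j j + b * cofactor M k k + a * b * d.
Proof.
pose g b := cofactor (M + b *: delta_mx k k) j j.
pose h a := cofactor (M + a *: delta_mx j j) k k.
have expand_j a b : \det (M + a *: delta_mx j j + b *: delta_mx k k) =
    \det M + b * cofactor M k k + a * g b.
  by rewrite addrAC det_add_delta det_add_delta.
have expand_k a b : \det (M + a *: delta_mx j j + b *: delta_mx k k) =
    \det M + a * cofactor M j j + b * h a.
  by rewrite det_add_delta det_add_delta.
have gE b : g b = cofactor M j j + b * (h 1 - cofactor M k k).
  apply: (addrI (\det M + b * cofactor M k k)).
  by rewrite -[g b]mul1r -expand_j expand_k; ring.
by exists (h 1 - cofactor M k k) => a b; rewrite expand_j gE; ring.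
Qed.
End DiagonalUpdate.

Section FirstOrder.
Variable R : realFieldType.

Lemma quadratic_ge0_lin_eq0 (e a b : R) :
  0 < e -> (forall t, `|t| < e -> 0 <= t * a + t ^+ 2 * b) -> a = 0.
Proof.
move=> e_gt0 ge0; apply/eqP; rewrite -normr_le0; apply/ler_addgt0Pr => eps eps_gt0.
set tau := Num.min (e / 2) (eps / (`|b| + 1)).
have b1_gt0 : 0 < `|b| + 1 by rewrite ltr_pwDr.
have tau_gt0 : 0 < tau by rewrite lt_min !divr_gt0.
have tau_lt_e : `|tau| < e.
  by rewrite gtr0_norm // gt_min ltr_pdivrMr // ltr_pMr ?ltr1n ?orTb.
have tau_le : tau * (`|b| + 1) <= eps by rewrite -ler_pdivlMr // ge_min lexx orbT.
have abs_a : `|a| <= tau * b.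
  have := ge0 _ tau_lt_e; have := ge0 (- tau); rewrite normrN => /(_ tau_lt_e).
  rewrite sqrrN !expr2 -mulrA -mulrDr mulNr -mulrN -mulrDr !pmulr_rge0 //.
  by rewrite ler_norml; lra.
have := ler_norm b; have := normr_ge0 b; rewrite add0r; nra.
Qed.

Lemma two_point_stationary (s2 X Y cX cY d : R) : 0 < s2 -> 0 < X -> 0 < Y ->
  (forall t, `|t| < Num.min X Y ->
     0 <= s2 * ((X + t)^-1 - X^-1) * cX + s2 * ((Y - t)^-1 - Y^-1) * cY
          + s2 * ((X + t)^-1 - X^-1) * (s2 * ((Y - t)^-1 - Y^-1)) * d) ->
  X ^+ 2 * cY = Y ^+ 2 * cX.
Proof.
move=> s2_gt0 X_gt0 Y_gt0 ge0; apply/eqP; rewrite -subr_eq0; apply/eqP.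
apply: (@quadratic_ge0_lin_eq0 (Num.min X Y) _ (X * cY + Y * cX - s2 * d)).
  by rewrite lt_min X_gt0.
move=> t t_small; have := ge0 t t_small.
have [Xt_gt0 Yt_gt0] : 0 < X + t /\ 0 < Y - t.
  by move: t_small; rewrite lt_min !ltr_norml; lra.
set q := X ^+ 2 * cY - Y ^+ 2 * cX.
rewrite [X in 0 <= X -> _](_ : _ = (t * q + t ^+ 2 * (X * cY + Y * cX - s2 * d)) *
                     (s2 / (X * (X + t) * Y * (Y - t)))).
  by rewrite pmulr_lge0 // divr_gt0 // !mulr_gt0.
by rewrite /q; field; rewrite !gt_eqF.
Qed.
End FirstOrder.

Section CovarianceMatrix.
Variables (R : rcfType) (n : nat) (s2 : R) (Sg : 'M[R]_n).
Hypotheses (s2_gt0 : 0 < s2) (Sg_sym : Sg^T = Sg) (Sg_psd : psdmx Sg).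
Implicit Types (x y : 'I_n -> R).

Definition covmx x : 'M[R]_n := s2 *: diag_mx (\row_j (x j)^-1) + Sg.

(* [psi x j] is the paper's psi_j, the j-th diagonal entry of
   M0(x)^-1 (covmx x)^-1 M0(x)^-1. *)
Definition psi x j := invmx (covmx x) j j / x j ^+ 2.

Lemma covmx_sym x : (covmx x)^T = covmx x.
Proof. by rewrite /covmx linearD /= linearZ /= tr_diag_mx Sg_sym. Qed.

Lemma qform_covmx x (u w : 'rV_n) :
  (u *m covmx x *m w^T) 0 0 =
  s2 * \sum_j u 0 j * w 0 j / x j + (u *m Sg *m w^T) 0 0.
Proof.
rewrite /covmx mulmxDr mulmxDl -scalemxAr -scalemxAl mul_mx_diag !mxE.
by congr (_ * _ + _); apply: eq_bigr => j _; rewrite !mxE mulrAC.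
Qed.

Lemma covmx_pd x : (forall j, 0 < x j) -> pdmx (covmx x).
Proof.
move=> x_gt0 v v_neq0; rewrite qform_covmx.
apply: ltr_pwDl (Sg_psd v); apply: mulr_gt0 => //.
have [j vj_neq0] : exists j, v 0 j != 0.
  apply/existsP; apply: contraNT v_neq0; rewrite negb_exists => /forallP v0.
  by apply/eqP/rowP => j; rewrite mxE; apply/eqP/negPn.
have term_ge0 i : 0 <= v 0 i * v 0 i / x i.
  by rewrite -expr2 divr_ge0 ?sqr_ge0 ?ltW.
rewrite (bigD1 j) //= ltr_pwDl ?sumr_ge0 // -expr2 divr_gt0 //.
by rewrite exprn_even_gt0.
Qed.

Lemma covmx_unit x : (forall j, 0 < x j) -> covmx x \in unitmx.
Proof. by move=> x_gt0; apply/pdmx_unit/covmx_pd. Qed.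

(* Coordinatewise the difference is [s2 (u_j - w_j y_j / x_j)^2 / y_j], and the
   [Sg] part is the quadratic form of [Sg] at [u - w]. *)
Lemma covmx_cross_le x y (u w : 'rV_n) :
  (forall j, 0 < x j) -> (forall j, 0 < y j) ->
  2 * (u *m covmx x *m w^T) 0 0 - (u *m covmx y *m u^T) 0 0 <=
  (w *m covmx (fun j => x j ^+ 2 / y j) *m w^T) 0 0.
Proof.
move=> x_gt0 y_gt0; rewrite !qform_covmx.
have := Sg_psd (u - w); rewrite qformB // => Sg_uw.
have diag_le j : 2 * (u 0 j * w 0 j / x j) - u 0 j * u 0 j / y j <=
                 w 0 j * w 0 j / (x j ^+ 2 / y j).
  have xj_gt0 := x_gt0 j; have yj_gt0 := y_gt0 j.
  rewrite -subr_ge0 (_ : _ - _ = (u 0 j - w 0 j * y j / x j) ^+ 2 / y j).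
    by rewrite divr_ge0 ?sqr_ge0 ?ltW.
  by field; rewrite !gt_eqF.
have sum_le : 2 * (s2 * \sum_j u 0 j * w 0 j / x j) - s2 * \sum_j u 0 j * u 0 j / y j
    <= s2 * \sum_j w 0 j * w 0 j / (x j ^+ 2 / y j).
  rewrite mulrCA -mulrBr ler_pM2l // mulr_sumr -sumrB.
  by apply: ler_sum => j _; apply: diag_le.
lra.
Qed.

(* [v C^-1 v^T = 2 u v^T - u C u^T] for [u = v C^-1]. *)
Lemma qform_invmx_covmx_le x y (v : 'rV_n) :
  (forall j, 0 < x j) -> (forall j, 0 < y j) ->
  (v *m invmx (covmx y) *m v^T) 0 0 <=
  (v *m (invmx (covmx x) *m covmx (fun j => x j ^+ 2 / y j) *m invmx (covmx x))
     *m v^T) 0 0.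
Proof.
move=> x_gt0 y_gt0.
have := covmx_cross_le (v *m invmx (covmx y)) (v *m invmx (covmx x)) x_gt0 y_gt0.
rewrite !trmx_mul !trmx_inv !covmx_sym !mulmxA mulmxKV ?mulmxK ?covmx_unit //.
lra.
Qed.

Lemma mxtrace_invmx_covmx_sq x y c :
  (forall j, 0 < x j) -> (forall j, 0 < y j) -> \sum_j y j = \sum_j x j ->
  (forall j, psi x j = c) ->
  \tr (invmx (covmx x) *m covmx (fun j => x j ^+ 2 / y j)) = n%:R.
Proof.
move=> x_gt0 y_gt0 sum_yx psi_c.
rewrite -[n%:R](mxtrace1 R) -(mulVmx (covmx_unit x_gt0)) /covmx !mulmxDr !mxtraceD.
congr (_ + _); rewrite -!scalemxAr !mxtraceZ !mxtrace_mul_diag; congr (_ * _).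
have Bjj j : invmx (covmx x) j j = c * x j ^+ 2.
  by rewrite -(psi_c j) /psi divfK // expf_neq0 // gt_eqF.
transitivity (c * \sum_j y j).
  rewrite mulr_sumr; apply: eq_bigr => j _; rewrite Bjj mxE.
  have xj_gt0 := x_gt0 j; have yj_gt0 := y_gt0 j.
  by field; rewrite !gt_eqF.
rewrite sum_yx mulr_sumr; apply: eq_bigr => j _; rewrite Bjj mxE.
have xj_gt0 := x_gt0 j.
by field; rewrite gt_eqF.
Qed.

Lemma mxtrace_congr_invmx_covmx_le x y c (L : 'M_n) :
  (forall j, 0 < x j) -> (forall j, 0 < y j) -> \sum_j y j = \sum_j x j ->
  (forall j, psi x j = c) -> covmx x = L *m L^T ->
  \tr (L^T *m invmx (covmx y) *m L) <= n%:R.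
Proof.
move=> x_gt0 y_gt0 sum_yx psi_c Cx_eq.
rewrite -(mxtrace_invmx_covmx_sq x_gt0 y_gt0 sum_yx psi_c) -{2}[L]trmxK.
apply: le_trans (ler_mxtrace_qform _ (fun v => qform_invmx_covmx_le v x_gt0 y_gt0)) _.
by rewrite trmxK mxtrace_mulC !mulmxA -Cx_eq mulmxV ?covmx_unit // mul1mx mxtrace_mulC.
Qed.

Lemma det_covmx_min x y c :
  (forall j, 0 < x j) -> (forall j, 0 < y j) -> \sum_j y j = \sum_j x j ->
  (forall j, psi x j = c) -> \det (covmx x) <= \det (covmx y).
Proof.
move=> x_gt0 y_gt0 sum_yx psi_c.
have Cx_pd := covmx_pd x_gt0; have Cy_pd := covmx_pd y_gt0.
have detCx_gt0 := pdmx_det_gt0 (covmx_sym x) Cx_pd.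
have detCy_gt0 := pdmx_det_gt0 (covmx_sym y) Cy_pd.
have [L _ Cx_eq] := cholesky (covmx_sym x) Cx_pd.
have LT_unit : L^T \in unitmx.
  rewrite unitmx_tr unitmxE unitfE; apply: contraTneq detCx_gt0 => detL0.
  by rewrite Cx_eq det_mulmx det_tr detL0 mul0r ltxx.
set G := L^T *m invmx (covmx y) *m L.
have G_sym : G^T = G by rewrite /G !trmx_mul trmxK trmx_inv covmx_sym mulmxA.
have G_pd : pdmx G.
  by have := pdmx_congr LT_unit (pdmx_inv (covmx_sym y) Cy_pd); rewrite trmxK.
have detG : \det G = \det (covmx x) / \det (covmx y).
  by rewrite /G !det_mulmx det_inv det_tr Cx_eq det_mulmx det_tr mulrAC.
have := det_le1_of_mxtrace_le G_sym G_pd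
          (mxtrace_congr_invmx_covmx_le x_gt0 y_gt0 sum_yx psi_c Cx_eq).
by rewrite detG ler_pdivrMr // mul1r.
Qed.

Lemma covmx_update2 x y j k : j != k ->
  (forall i, i != j -> i != k -> y i = x i) ->
  covmx y = covmx x + (s2 * ((y j)^-1 - (x j)^-1)) *: delta_mx j j
                    + (s2 * ((y k)^-1 - (x k)^-1)) *: delta_mx k k.
Proof.
move=> jk yx; apply/matrixP => p q; rewrite !mxE.
have [<-|pq] := eqVneq p q; last first.
  have off i : (p == i) && (q == i) = false.
    by apply: contraNF pq => /andP[/eqP-> /eqP->].
  by rewrite !mulr0n !mulr0 !off !mulr0 !addr0.
rewrite !andbb !mulr1n.
have [->|pj] := eqVneq p j; first by rewrite (negbTE jk) /=; ring.
have [->|pk] := eqVneq p k; first by rewrite /=; ring.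
by rewrite yx //= !mulr0 !addr0.
Qed.

Lemma covmx_transfer x j k t : (forall i, 0 < x i) -> j != k ->
  `|t| < Num.min (x j) (x k) ->
  exists2 y, (forall i, 0 < y i) /\ \sum_i y i = \sum_i x i &
    covmx y = covmx x + (s2 * ((x j + t)^-1 - (x j)^-1)) *: delta_mx j j
                      + (s2 * ((x k - t)^-1 - (x k)^-1)) *: delta_mx k k.
Proof.
move=> x_gt0 jk t_small.
pose y i := x i + t * ((i == j)%:R - (i == k)%:R).
have yj : y j = x j + t by rewrite /y eqxx (negbTE jk) subr0 mulr1.
have yk : y k = x k - t by rewrite /y eqxx eq_sym (negbTE jk) sub0r mulrN1.
have yx i : i != j -> i != k -> y i = x i.
  by move=> /negbTE-ij /negbTE-ik; rewrite /y ij ik subrr mulr0 addr0.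
exists y; last by rewrite (covmx_update2 jk yx) yj yk.
split=> [i|].
  move: t_small; rewrite lt_min !ltr_norml => /andP[/andP[? ?] /andP[? ?]].
  have [->|ij] := eqVneq i j; first by rewrite yj; lra.
  have [->|ik] := eqVneq i k; first by rewrite yk; lra.
  by rewrite yx.
have sum_delta (i0 : 'I_n) : \sum_i ((i == i0)%:R : R) = 1.
  by rewrite (bigD1 i0) //= eqxx big1 ?addr0 // => i /negbTE ->.
by rewrite big_split /= -mulr_sumr sumrB !sum_delta subrr mulr0 addr0.
Qed.

Lemma psi_eq_of_det_min x :
  (forall j, 0 < x j) ->
  (forall y, (forall j, 0 < y j) -> \sum_j y j = \sum_j x j ->
     \det (covmx x) <= \det (covmx y)) ->
  forall j k, psi x j = psi x k.
Proof.
move=> x_gt0 x_min j k; have [->//|jk] := eqVneq j k.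
have [d det_expand] := det_add_delta2 (covmx x) j k.
have stationary :
    x j ^+ 2 * cofactor (covmx x) k k = x k ^+ 2 * cofactor (covmx x) j j.
  apply: (@two_point_stationary _ s2 _ _ _ _ d s2_gt0 (x_gt0 j) (x_gt0 k)).
  move=> t t_small; have [y [y_gt0 sum_y] Cy] := covmx_transfer x_gt0 jk t_small.
  by have := x_min y y_gt0 sum_y; rewrite Cy det_expand -!addrA lerDl !addrA.
have := pdmx_unit (covmx_pd x_gt0); rewrite unitmxE unitfE => det_neq0.
have xj_gt0 := x_gt0 j; have xk_gt0 := x_gt0 k.
have cof_kk : cofactor (covmx x) k k = x k ^+ 2 * cofactor (covmx x) j j / x j ^+ 2.
  by rewrite -stationary mulrC mulKf // expf_neq0 // gt_eqF.
rewrite /psi /invmx covmx_unit // !mxE cof_kk.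
by field; rewrite det_neq0 !gt_eqF.
Qed.
End CovarianceMatrix.

Section Design.
Variables (R : realType) (n : nat) (s2 : R) (Sg A : 'M[R]_n).
Hypotheses (s2_gt0 : 0 < s2) (Sg_sym : Sg^T = Sg) (Sg_psd : psdmx Sg).
Implicit Types (x : 'I_n -> R).

Lemma invmx_M0 x : (forall j, 0 < x j) -> invmx (M0 x) = diag_mx (\row_j (x j)^-1).
Proof.
move=> x_gt0; rewrite /M0 invmx_diag => [|j]; last by rewrite mxE gt_eqF.
by congr diag_mx; apply/rowP => j; rewrite !mxE.
Qed.

Lemma Mbeta_covmx x : (forall j, 0 < x j) ->
  Mbeta s2 Sg A x = A^T *m invmx (covmx s2 Sg x) *m A.
Proof.
move=> x_gt0; set S := M0sqrt x.
have sqrt_gt0 j : 0 < Num.sqrt (x j) by rewrite sqrtr_gt0.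
have S_unit : S \in unitmx.
  by rewrite unitmxE unitfE det_diag; apply/prodf_neq0 => j _; rewrite mxE gt_eqF.
have SDS : S *m diag_mx (\row_j (x j)^-1) *m S = 1%:M.
  rewrite !mulmx_diag -diag_const_mx; congr diag_mx; apply/rowP => j.
  by rewrite !mxE mulrAC -expr2 sqr_sqrtr ?mulfV ?gt_eqF ?ltW.
have SCS : s2%:M + S *m Sg *m S = S *m covmx s2 Sg x *m S.
  by rewrite mulmxDr mulmxDl -scalemxAr -scalemxAl SDS scalemx1.
rewrite /Mbeta -/S SCS !invmxM ?unitmx_mul ?S_unit ?covmx_unit //.
by rewrite !mulmxA mulmxK // mulmxKV.
Qed.

Lemma det_Mbeta x : (forall j, 0 < x j) ->
  \det (Mbeta s2 Sg A x) = \det A ^+ 2 / \det (covmx s2 Sg x).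
Proof. by move=> x_gt0; rewrite Mbeta_covmx // !det_mulmx det_tr det_inv; ring. Qed.

Lemma estimable_iff_pos I x : A \in unitmx -> is_design I x ->
  estimable A x <-> forall j, 0 < x j.
Proof.
move=> A_unit [x_ge0 _]; rewrite /estimable mxrank_unit //.
have M0_unit : ((M0 x)^T \in unitmx) = [forall j, x j != 0].
  rewrite unitmx_tr unitmxE unitfE det_diag; apply/prodf_neq0/forallP => x_neq0 j.
    by have := x_neq0 j isT; rewrite mxE.
  by move=> _; rewrite mxE x_neq0.
split=> [[_ AM0] j | x_gt0].
  have : row_full (M0 x)^T.
    by rewrite /row_full eqn_leq rank_leq_col -{1}(mxrank_unit A_unit) -mxrank_tr mxrankS.
  rewrite row_full_unit M0_unit => /forallP/(_ j) xj_neq0.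
  by rewrite lt_def xj_neq0 x_ge0.
split=> //; apply: submx_full; rewrite row_full_unit M0_unit.
by apply/forallP => j; rewrite gt_eqF.
Qed.

Lemma D_optimal_iff_det_min I x : A \in unitmx -> is_design I x -> (forall j, 0 < x j) ->
  D_optimal I s2 Sg A x <->
  forall y, (forall j, 0 < y j) -> \sum_j y j = \sum_j x j ->
    \det (covmx s2 Sg x) <= \det (covmx s2 Sg y).
Proof.
move=> A_unit x_design x_gt0; have [_ sum_x] := x_design.
have detA2_gt0 : 0 < \det A ^+ 2.
  by rewrite exprn_even_gt0 //; move: A_unit; rewrite unitmxE unitfE.
have detC_gt0 y : (forall j, 0 < y j) -> 0 < \det (covmx s2 Sg y).
  by move=> y_gt0; apply: pdmx_det_gt0; [exact: covmx_sym | exact: covmx_pd].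
have ln_le y : (forall j, 0 < y j) ->
    ln (\det (Mbeta s2 Sg A y)) <= ln (\det (Mbeta s2 Sg A x)) =
    (\det (covmx s2 Sg x) <= \det (covmx s2 Sg y)).
  move=> y_gt0; rewrite !det_Mbeta // ler_ln ?posrE ?divr_gt0 ?detC_gt0 //.
  by rewrite ler_pM2l // lef_pV2 ?posrE ?detC_gt0.
split=> [[_ [_ x_opt]] y y_gt0 sum_y | x_min].
  have y_design : is_design I y by split=> [j|]; [exact/ltW | rewrite sum_y].
  by rewrite -ln_le //; apply: x_opt => //; apply/(estimable_iff_pos A_unit y_design).
split=> //; split; first exact/(estimable_iff_pos A_unit x_design).
move=> y y_design /(estimable_iff_pos A_unit y_design) y_gt0.
by rewrite ln_le // x_min //; case: y_design => _ ->.
Qed.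
End Design.

Unset Implicit Arguments.

Theorem corollary2 (R : realType) (n : nat) (I s2 : R) (Sg A : 'M[R]_n)
  (xis : 'I_n -> R) :
  (0 < n)%N -> 0 < s2 -> 0 < I ->
  Sg^T = Sg -> (forall v : 'rV[R]_n, 0 <= (v *m Sg *m v^T) 0 0) ->
  A \in unitmx ->
  is_design I xis -> (forall j, 0 < xis j) ->
  (D_optimal I s2 Sg A xis <->
   forall j : 'I_n,
     I * (invmx (M0 xis) *m invmx (s2 *: invmx (M0 xis) + Sg)
            *m invmx (M0 xis)) j j
     = \tr (invmx (s2 *: invmx (M0 xis) + Sg) *m invmx (M0 xis))).
Proof.
move=> _ s2_gt0 I_gt0 Sg_sym Sg_psd A_unit xis_design xis_gt0.
have [_ sum_xis] := xis_design.
rewrite D_optimal_iff_det_min // invmx_M0 // -/(covmx s2 Sg xis).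
have psiE j : (diag_mx (\row_j (xis j)^-1) *m invmx (covmx s2 Sg xis)
                 *m diag_mx (\row_j (xis j)^-1)) j j = psi s2 Sg xis j.
  by rewrite mul_mx_diag mul_diag_mx !mxE /psi; field; rewrite gt_eqF.
have trE : \tr (invmx (covmx s2 Sg xis) *m diag_mx (\row_j (xis j)^-1)) =
           \sum_k xis k * psi s2 Sg xis k.
  rewrite mxtrace_mul_diag; apply: eq_bigr => k _; rewrite mxE /psi.
  by field; rewrite gt_eqF.
rewrite trE; split=> [xis_min j | crit y y_gt0 sum_y].
  have psi_eq := psi_eq_of_det_min s2_gt0 Sg_psd xis_gt0 xis_min.
  rewrite psiE (eq_bigr (fun k => xis k * psi s2 Sg xis j)) => [|k _].
    by rewrite -mulr_suml sum_xis.
  by rewrite (psi_eq k j).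
have psi_c j : psi s2 Sg xis j = (\sum_k xis k * psi s2 Sg xis k) / I.
  by rewrite -(crit j) psiE mulrC mulKf ?gt_eqF.
exact: (det_covmx_min s2_gt0 Sg_sym Sg_psd xis_gt0 y_gt0 sum_y psi_c).
Qed.
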